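(* For every formula $\phi$, $\mathbf{GLP}\vdash[1]\phi$ if and only if $\mathbf{GLP}\vdash Q_k(\phi)$ for some $k\geq 1$.
   Context: $\mathbf{GLP}$ is the propositional polymodal logic with modalities $[0],[1],\dots$ ($\langle k\rangle:=\neg[k]\neg$) axiomatized by classical tautologies; $[k](\phi\to\psi)\to([k]\phi\to[k]\psi)$; $[k]([k]\phi\to\phi)\to[k]\phi$; $\langle j\rangle\phi\to[k]\langle j\rangle\phi$ for $j<k$; $[j]\phi\to[k]\phi$ for $j\leq k$; rules modus ponens and necessitation. Define $Q_1(\phi):=\phi$ and $Q_{i+1}(\phi):=\phi\lor[0]Q_i(\phi)$. *)

From Stdlib Require Import Arith.

Inductive form : Type :=
| Var : nat -> form
| Bot : form
| Imp : form -> form -> form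
| Box : nat -> form -> form.

Definition Neg (a : form) : form := Imp a Bot.
Definition Top : form := Neg Bot.
Definition Or (a b : form) : form := Imp (Neg a) b.
Definition And (a b : form) : form := Neg (Imp a (Neg b)).
Definition Dia (k : nat) (a : form) : form := Neg (Box k (Neg a)).

(* Classical propositional tautologies: formulas true under every Boolean
   valuation, where boxed subformulas are treated as atoms (valuation on them
   is arbitrary). *)
Fixpoint beval (v : form -> bool) (a : form) : bool :=
  match a with
  | Var _ => v a
  | Bot => false
  | Imp b c => implb (beval v b) (beval v c)
  | Box _ _ => v a
  end.

Definition tautology (a : form) : Prop := forall v : form -> bool, beval v a = true.

Inductive GLP_prv : form -> Prop :=
| ax_taut : forall a, tautology a -> GLP_prv a
| ax_K : forall k a b, GLP_prv (Imp (Box k (Imp a b)) (Imp (Box k a) (Box k b)))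
| ax_Lob : forall k a, GLP_prv (Imp (Box k (Imp (Box k a) a)) (Box k a))
| ax_neg : forall j k a, j < k -> GLP_prv (Imp (Dia j a) (Box k (Dia j a)))
| ax_mono : forall j k a, j <= k -> GLP_prv (Imp (Box j a) (Box k a))
| r_mp : forall a b, GLP_prv (Imp a b) -> GLP_prv a -> GLP_prv b
| r_nec : forall k a, GLP_prv a -> GLP_prv (Box k a).

(* Q_1(phi) = phi, Q_{i+1}(phi) = phi \/ [0] Q_i(phi).
   Indexed so that Q (S i) phi is Q_{i+1}; Q 0 phi is a dummy (= phi). *)
Fixpoint Q (i : nat) (phi : form) : form :=
  match i with
  | 0 => phi
  | 1 => phi
  | S i' => Or phi (Box 0 (Q i' phi))
  end.

From Stdlib Require Import Lia List Classical ClassicalEpsilon.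
Import ListNotations.

(* Suppose [1]phi is provable but no Q_k(phi) is.  Then ~phi together with all
   reflection instances [0]a -> a is consistent.  Indeed, call c 0-stable if
   c -> [0]c is provable; if c /\ rho(L) -> phi is provable, where rho(L) is the
   conjunction of the instances for a in L, then so is c -> Q_{|L|+1}(phi).
   Either all these instances hold, giving phi, or [0]a holds for some a in L;
   then c /\ [0]a implies [0](c /\ a /\ [0]a), and the 0-stable formula
   c /\ a /\ [0]a satisfies the hypothesis for L without a, so [0]Q_{|L|}(phi)
   holds by induction.
   Extend this set to a maximal consistent set G and read formulas in a model
   where atoms and [0]-formulas are decided by membership in G, [1]b means that
   b follows from some a with [0]a in G and some 1-stable l in G, and [k] for
   k >= 2 is verum.  Every theorem of GLP is true there, so [1]phi provides such
   a and l; reflection puts a in G, hence phi is in G, contradicting ~phi in G.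
   Conversely [1]Q_{k+1}(phi) -> [1]phi: [0]Q_k(phi) implies [1]Q_k(phi), and
   ~[0]Q_k(phi) is 1-stable by the axiom <0>a -> [1]<0>a. *)

Ltac bool_cases :=
  repeat match goal with
  | |- context [beval ?v ?x] => destruct (beval v x)
  | |- context [?v (Box ?k ?x)] => destruct (v (Box k x))
  | |- context [forallb ?f ?l] => destruct (forallb f l)
  end.

Ltac truth_table :=
  let v := fresh "v" in
  intros v; simpl; bool_cases; simpl; intros;
  try reflexivity; try discriminate; try congruence.

Lemma prv_tauto1 (a b : form) :
  (forall v, beval v a = true -> beval v b = true) -> GLP_prv a -> GLP_prv b.
Proof.
  intros H Ha. apply (r_mp a b); auto. apply ax_taut. intro v. simpl.
  specialize (H v). destruct (beval v a); simpl; auto.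
Qed.

Lemma prv_tauto2 (a b c : form) :
  (forall v, beval v a = true -> beval v b = true -> beval v c = true) ->
  GLP_prv a -> GLP_prv b -> GLP_prv c.
Proof.
  intros H Ha Hb. apply (r_mp b c); auto. apply (r_mp a); auto.
  apply ax_taut. intro v. simpl.
  specialize (H v). destruct (beval v a), (beval v b); simpl; auto.
Qed.

Lemma prv_tauto3 (a b c d : form) :
  (forall v, beval v a = true -> beval v b = true -> beval v c = true ->
     beval v d = true) ->
  GLP_prv a -> GLP_prv b -> GLP_prv c -> GLP_prv d.
Proof.
  intros H Ha Hb Hc. apply (r_mp c d); auto. apply (r_mp b); auto.
  apply (r_mp a); auto. apply ax_taut. intro v. simpl.
  specialize (H v). destruct (beval v a), (beval v b), (beval v c); simpl; auto.
Qed.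

Lemma box_mono (k : nat) (a b : form) :
  GLP_prv (Imp a b) -> GLP_prv (Imp (Box k a) (Box k b)).
Proof. intros H. apply (r_mp (Box k (Imp a b))); [apply ax_K | apply r_nec; exact H]. Qed.

Lemma box_and (k : nat) (a b : form) :
  GLP_prv (Imp (Box k a) (Imp (Box k b) (Box k (And a b)))).
Proof.
  assert (H1 : GLP_prv (Imp (Box k a) (Box k (Imp b (And a b))))).
  { apply box_mono. apply ax_taut. truth_table. }
  assert (H2 := ax_K k b (And a b)).
  revert H1 H2. apply prv_tauto2. truth_table.
Qed.

(* The usual derivation of axiom 4 from Löb's axiom, applied to a /\ [k]a. *)
Lemma box_trans (k : nat) (a : form) : GLP_prv (Imp (Box k a) (Box k (Box k a))).
Proof.
  set (p := And a (Box k a)).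
  assert (H1 : GLP_prv (Imp (Box k p) (Box k a))).
  { apply box_mono. apply ax_taut. unfold p. truth_table. }
  assert (H2 : GLP_prv (Imp a (Imp (Box k p) p))).
  { revert H1. apply prv_tauto1. unfold p. truth_table. }
  assert (H3 : GLP_prv (Imp (Box k p) (Box k (Box k a)))).
  { apply box_mono. apply ax_taut. unfold p. truth_table. }
  generalize (box_mono k _ _ H2) (ax_Lob k p) H3. apply prv_tauto3. truth_table.
Qed.

Definition stable (k : nat) (c : form) : Prop := GLP_prv (Imp c (Box k c)).

Lemma stable_Top (k : nat) : stable k Top.
Proof.
  assert (H : GLP_prv (Box k Top)) by (apply r_nec; apply ax_taut; truth_table).
  revert H. apply prv_tauto1. truth_table.
Qed.

Lemma stable_And (k : nat) (c d : form) : stable k c -> stable k d -> stable k (And c d).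
Proof. intros Hc Hd. generalize Hc Hd (box_and k c d). apply prv_tauto3. truth_table. Qed.

Lemma stable_box (j k : nat) (a : form) : j <= k -> stable k (Box j a).
Proof.
  intros Hjk. generalize (box_trans j a) (ax_mono j k (Box j a) Hjk).
  apply prv_tauto2. truth_table.
Qed.

Lemma stable_neg_box (j k : nat) (a : form) : j < k -> stable k (Neg (Box j a)).
Proof.
  intros Hjk.
  assert (Hdn : GLP_prv (Imp (Box j (Neg (Neg a))) (Box j a))).
  { apply box_mono. apply ax_taut. truth_table. }
  assert (Hdn' : GLP_prv (Imp (Box k (Dia j (Neg a))) (Box k (Neg (Box j a))))).
  { apply box_mono.
    assert (H : GLP_prv (Imp (Box j a) (Box j (Neg (Neg a))))).
    { apply box_mono. apply ax_taut. truth_table. }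
    revert H. apply prv_tauto1. truth_table. }
  generalize Hdn (ax_neg j k (Neg a) Hjk) Hdn'. apply prv_tauto3. truth_table.
Qed.

Lemma box1_Q_box1 (k : nat) (phi : form) :
  GLP_prv (Imp (Box 1 (Q (S k) phi)) (Box 1 phi)).
Proof.
  induction k as [|k IHk].
  - apply ax_taut. truth_table.
  - change (Q (S (S k)) phi) with (Or phi (Box 0 (Q (S k) phi))).
    set (q := Q (S k) phi) in *.
    assert (Hbox : GLP_prv (Imp (Box 0 q) (Box 1 phi))).
    { generalize (ax_mono 0 1 q ltac:(lia)) IHk. apply prv_tauto2. truth_table. }
    assert (Hor : GLP_prv (Imp (Box 1 (Or phi (Box 0 q)))
                               (Imp (Box 1 (Neg (Box 0 q))) (Box 1 phi)))).
    { assert (H : GLP_prv (Imp (Box 1 (Or phi (Box 0 q)))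
                               (Box 1 (Imp (Neg (Box 0 q)) phi)))).
      { apply box_mono. apply ax_taut. truth_table. }
      generalize H (ax_K 1 (Neg (Box 0 q)) phi). apply prv_tauto2. truth_table. }
    generalize (stable_neg_box 0 1 q ltac:(lia)) Hbox Hor. apply prv_tauto3. truth_table.
Qed.

Fixpoint bigAnd (l : list form) : form :=
  match l with [] => Top | x :: l' => And x (bigAnd l') end.

Fixpoint reflAnd (l : list form) : form :=
  match l with [] => Top | a :: l' => And (Imp (Box 0 a) a) (reflAnd l') end.

Lemma beval_bigAnd (v : form -> bool) (l : list form) :
  beval v (bigAnd l) = forallb (beval v) l.
Proof.
  induction l as [|a l IHl]; simpl; auto. rewrite <- IHl.
  destruct (beval v a), (beval v (bigAnd l)); auto.
Qed.

Lemma beval_reflAnd (v : form -> bool) (l : list form) :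
  beval v (reflAnd l) = forallb (fun a => implb (v (Box 0 a)) (beval v a)) l.
Proof.
  induction l as [|a l IHl]; simpl; auto. rewrite <- IHl.
  destruct (v (Box 0 a)), (beval v a), (beval v (reflAnd l)); auto.
Qed.

Lemma stable_extend (k : nat) (c a : form) : stable k c ->
  GLP_prv (Imp c (Imp (Box k a) (Box k (And c (And a (Box k a)))))).
Proof.
  intros Hc.
  assert (Ha : GLP_prv (Imp (Box k a) (Box k (And a (Box k a))))).
  { generalize (box_trans k a) (box_and k a (Box k a)). apply prv_tauto2. truth_table. }
  generalize Hc Ha (box_and k c (And a (Box k a))). apply prv_tauto3. truth_table.
Qed.

Lemma stable_And_refl (k : nat) (c a : form) :
  stable k c -> stable k (And c (And a (Box k a))).
Proof. intros Hc. generalize (stable_extend k c a Hc). apply prv_tauto1. truth_table. Qed.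

Lemma neg_reflAnd_elim (c X : form) (L : list form) :
  (forall a, In a L -> GLP_prv (Imp c (Imp (Box 0 a) X))) ->
  GLP_prv (Imp c (Imp (Neg (reflAnd L)) X)).
Proof.
  induction L as [|a L IHL]; intros HL.
  - apply ax_taut. truth_table.
  - generalize (HL a (or_introl eq_refl)) (IHL (fun b Hb => HL b (or_intror Hb))).
    apply prv_tauto2. truth_table.
Qed.

Lemma Q_of_reflAnd (phi c : form) (L : list form) :
  stable 0 c -> GLP_prv (Imp (And c (reflAnd L)) phi) ->
  GLP_prv (Imp c (Q (S (length L)) phi)).
Proof.
  remember (length L) as n eqn:Hn. revert L c Hn.
  induction n as [|n IH]; intros L c Hn Hc H.
  - destruct L; [|discriminate]. revert H. apply prv_tauto1. truth_table.
  - change (Q (S (S n)) phi) with (Or phi (Box 0 (Q (S n) phi))).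
    assert (Hrefl : GLP_prv (Imp c (Imp (Neg (reflAnd L)) (Box 0 (Q (S n) phi))))).
    { apply neg_reflAnd_elim. intros a Ha.
      destruct (in_split a L Ha) as (L1 & L2 & ->).
      assert (Hphi : GLP_prv (Imp (And (And c (And a (Box 0 a))) (reflAnd (L1 ++ L2))) phi)).
      { revert H. apply prv_tauto1. intros v. simpl.
        rewrite !beval_reflAnd, !forallb_app. simpl. bool_cases; simpl; auto. }
      assert (HQ := IH (L1 ++ L2) _ ltac:(rewrite length_app in *; simpl in Hn; lia)
                      (stable_And_refl 0 c a Hc) Hphi).
      generalize (stable_extend 0 c a Hc) (box_mono 0 _ _ HQ). apply prv_tauto2. truth_table. }
    revert H Hrefl. apply prv_tauto2. truth_table.
Qed.

Definition inconsistent (X : form -> Prop) : Prop :=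
  exists L, (forall x, In x L -> X x) /\ GLP_prv (Imp (bigAnd L) Bot).

Definition refl_theory (phi x : form) : Prop :=
  x = Neg phi \/ exists a, x = Imp (Box 0 a) a.

Lemma refl_theory_reflAnd (phi : form) (L : list form) :
  (forall x, In x L -> refl_theory phi x) ->
  exists L', forall v, beval v (reflAnd L') = true -> beval v phi = false ->
                  beval v (bigAnd L) = true.
Proof.
  induction L as [|y L IH]; intros HL.
  - exists []. reflexivity.
  - destruct IH as [L' HL']; [intros x Hx; apply HL; right; exact Hx|].
    destruct (HL y (or_introl eq_refl)) as [->|[a ->]].
    + exists L'. intros v Hr Hphi. simpl. rewrite (HL' v Hr Hphi), Hphi. reflexivity.
    + exists (a :: L'). intros v Hr Hphi. simpl in Hr |- *.
      specialize (HL' v). revert Hr HL'. bool_cases; simpl; auto.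
Qed.

Lemma refl_theory_consistent (phi : form) :
  (forall n, ~ GLP_prv (Q (S n) phi)) -> ~ inconsistent (refl_theory phi).
Proof.
  intros HnoQ [L [HL Hbot]]. destruct (refl_theory_reflAnd phi L HL) as [L' HL'].
  apply (HnoQ (length L')).
  assert (H : GLP_prv (Imp (And Top (reflAnd L')) phi)).
  { revert Hbot. apply prv_tauto1. intros v. specialize (HL' v). simpl.
    destruct (beval v (bigAnd L)), (beval v (reflAnd L')), (beval v phi); simpl in *; auto. }
  generalize (Q_of_reflAnd phi Top L' (stable_Top 0) H). apply prv_tauto1. truth_table.
Qed.

Fixpoint forms (n : nat) : list form :=
  match n with
  | 0 => [Bot; Var 0]
  | S m =>
      forms m ++ Var (S m)
        :: map (fun p => Imp (fst p) (snd p)) (list_prod (forms m) (forms m))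
        ++ flat_map (fun k => map (Box k) (forms m)) (seq 0 (S (S m)))
  end.

Lemma forms_mono (n m : nat) (x : form) : n <= m -> In x (forms n) -> In x (forms m).
Proof.
  induction 1 as [|m _ IH]; auto. intros Hx. cbn [forms]. apply in_or_app. left. auto.
Qed.

Lemma forms_exhaustive (t : form) : exists n, In t (forms n).
Proof.
  induction t as [[|n]| |t1 [n1 H1] t2 [n2 H2]|k t [n H]].
  - exists 0. simpl. auto.
  - exists (S n). cbn [forms]. apply in_or_app. right. left. reflexivity.
  - exists 0. simpl. auto.
  - exists (S (max n1 n2)). cbn [forms]. apply in_or_app. right. right. apply in_or_app. left.
    apply in_map_iff. exists (t1, t2). split; [reflexivity|]. apply in_prod.
    + apply forms_mono with n1; [lia | exact H1].
    + apply forms_mono with n2; [lia | exact H2].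
  - exists (S (max n k)). cbn [forms]. apply in_or_app. right. right. apply in_or_app. right.
    apply in_flat_map. exists k. split; [apply in_seq; lia|].
    apply in_map. apply forms_mono with n; [lia | exact H].
Qed.

Definition add (X : form -> Prop) (t x : form) : Prop := X x \/ x = t.

Lemma add_bigAnd (X : form -> Prop) (t : form) (L : list form) :
  (forall x, In x L -> add X t x) ->
  exists L', (forall x, In x L' -> X x) /\
    forall v, beval v (bigAnd L') = true -> beval v t = true -> beval v (bigAnd L) = true.
Proof.
  induction L as [|y L IH]; intros HL.
  - exists []. split; [simpl; tauto | reflexivity].
  - destruct IH as [L' [HX Hv]]; [intros x Hx; apply HL; right; exact Hx|].
    destruct (HL y (or_introl eq_refl)) as [Hy| ->].
    + exists (y :: L'). split; [intros x [<-|Hx]; auto|].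
      intros v. specialize (Hv v). simpl. revert Hv. bool_cases; simpl; auto.
    + exists L'. split; [exact HX|].
      intros v. specialize (Hv v). simpl. revert Hv. bool_cases; simpl; auto.
Qed.

Lemma inconsistent_add_cases (X : form -> Prop) (t : form) :
  inconsistent (add X t) -> inconsistent (add X (Neg t)) -> inconsistent X.
Proof.
  intros [L1 [H1 Hbot1]] [L2 [H2 Hbot2]].
  destruct (add_bigAnd X t L1 H1) as [L1' [HX1 Hv1]].
  destruct (add_bigAnd X (Neg t) L2 H2) as [L2' [HX2 Hv2]].
  exists (L1' ++ L2'). split.
  - intros x Hx. apply in_app_or in Hx. destruct Hx; auto.
  - revert Hbot1 Hbot2. apply prv_tauto2. intros v. specialize (Hv1 v). specialize (Hv2 v).
    simpl in *. rewrite !beval_bigAnd in *. rewrite forallb_app.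
    destruct (forallb (beval v) L1'), (forallb (beval v) L2'), (beval v t),
      (forallb (beval v) L1), (forallb (beval v) L2); simpl in *; auto.
Qed.

Definition decide (X : form -> Prop) (t : form) : form -> Prop :=
  if excluded_middle_informative (inconsistent (add X t)) then add X (Neg t) else add X t.

Fixpoint stage (R : form -> Prop) (n : nat) : form -> Prop :=
  match n with 0 => R | S m => fold_left decide (forms m) (stage R m) end.

Lemma decide_list_incl (l : list form) (X : form -> Prop) (x : form) :
  X x -> fold_left decide l X x.
Proof.
  revert X. induction l as [|t l IH]; simpl; intros X Hx; auto.
  apply IH. unfold decide. destruct excluded_middle_informative; left; exact Hx.
Qed.

Lemma decide_list_consistent (l : list form) (X : form -> Prop) :
  ~ inconsistent X -> ~ inconsistent (fold_left decide l X).
Proof.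
  revert X. induction l as [|t l IH]; simpl; intros X HX; auto.
  apply IH. unfold decide. destruct excluded_middle_informative as [Ht|Ht]; auto.
  intros Hnt. exact (HX (inconsistent_add_cases X t Ht Hnt)).
Qed.

Lemma decide_list_complete (l : list form) (X : form -> Prop) (t : form) :
  In t l -> fold_left decide l X t \/ fold_left decide l X (Neg t).
Proof.
  revert X. induction l as [|s l IH]; simpl; intros X Ht; [contradiction|].
  destruct Ht as [<-|Ht]; [|apply IH; exact Ht].
  unfold decide at 2 4. destruct excluded_middle_informative;
    [right | left]; apply decide_list_incl; right; reflexivity.
Qed.

Lemma stage_mono (R : form -> Prop) (n m : nat) (x : form) :
  n <= m -> stage R n x -> stage R m x.
Proof. induction 1; simpl; auto. intros Hx. apply decide_list_incl. auto. Qed.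

Lemma stage_consistent (R : form -> Prop) (n : nat) :
  ~ inconsistent R -> ~ inconsistent (stage R n).
Proof.
  intros HR. induction n as [|n IH]; simpl; [exact HR | apply decide_list_consistent; exact IH].
Qed.

Lemma lindenbaum (R : form -> Prop) : ~ inconsistent R ->
  exists G, (forall x, R x -> G x) /\ ~ inconsistent G /\ (forall x, G x \/ G (Neg x)).
Proof.
  intros HR. exists (fun x => exists n, stage R n x). split; [|split].
  - intros x Hx. exists 0. exact Hx.
  - intros [L [HL Hbot]].
    assert (Hn : exists n, forall x, In x L -> stage R n x).
    { clear Hbot. induction L as [|y L IH].
      - exists 0. simpl. tauto.
      - destruct IH as [n Hn]; [intros x Hx; apply HL; right; exact Hx|].
        destruct (HL y (or_introl eq_refl)) as [m Hm].
        exists (max n m). intros x [<-|Hx].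
        + apply stage_mono with m; [lia | exact Hm].
        + apply stage_mono with n; [lia | auto]. }
    destruct Hn as [n Hn].
    apply (stage_consistent R n HR). exists L. auto.
  - intros x. destruct (forms_exhaustive x) as [n Hn].
    destruct (decide_list_complete (forms n) (stage R n) x Hn); [left | right]; exists (S n); auto.
Qed.

Section Interpretation.

Variables G P : form -> Prop.

Fixpoint holds (t : form) : Prop :=
  match t with
  | Var _ => G t
  | Bot => False
  | Imp a b => holds a -> holds b
  | Box 0 a => G (Box 0 a)
  | Box 1 a => P a
  | Box _ _ => True
  end.

Lemma holds_taut (a : form) : tautology a -> holds a.
Proof.
  intros Ht.
  set (v := fun x => if excluded_middle_informative (holds x) then true else false).
  assert (Hv : forall b, beval v b = true <-> holds b).
  { induction b as [| |b1 IH1 b2 IH2|k b _]; simpl.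
    - unfold v. destruct excluded_middle_informative; simpl in *; intuition congruence.
    - intuition congruence.
    - rewrite <- IH1, <- IH2. destruct (beval v b1), (beval v b2); simpl; intuition congruence.
    - unfold v. destruct excluded_middle_informative; intuition congruence. }
  apply Hv. apply Ht.
Qed.

Hypothesis G_thm : forall x, GLP_prv x -> G x.
Hypothesis G_mp : forall x y, G x -> G (Imp x y) -> G y.
Hypothesis P_thm : forall x, GLP_prv x -> P x.
Hypothesis P_mp : forall x y, P (Imp x y) -> P x -> P y.
Hypothesis P_lob : forall b, P (Imp (Box 1 b) b) -> P b.
Hypothesis P_box0 : forall b, G (Box 0 b) -> P b.
Hypothesis P_dia0 : forall a, ~ G (Box 0 (Neg a)) -> P (Dia 0 a).

Lemma holds_sound (t : form) : GLP_prv t -> holds t.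
Proof.
  induction 1 as [a Ht|k a b|k a|j k a Hjk|j k a Hjk|a b _ IH1 _ IH2|k a Ha _].
  - apply holds_taut. exact Ht.
  - destruct k as [|[|k]]; simpl; intros; auto.
    apply (G_mp (Box 0 a)); auto. apply (G_mp (Box 0 (Imp a b))); auto. apply G_thm, ax_K.
    eauto.
  - destruct k as [|[|k]]; simpl; intros; auto.
    apply (G_mp (Box 0 (Imp (Box 0 a) a))); auto. apply G_thm, ax_Lob.
  - destruct k as [|[|k]], j as [|j]; simpl; try lia; auto.
  - destruct j as [|[|j]], k as [|[|k]]; simpl; intros; auto; lia.
  - exact (IH1 IH2).
  - destruct k as [|[|k]]; simpl; auto. apply G_thm, r_nec. exact Ha.
Qed.

End Interpretation.

Section MaximalConsistent.

Variable G : form -> Prop.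
Hypothesis G_consistent : ~ inconsistent G.
Hypothesis G_complete : forall x, G x \/ G (Neg x).

Lemma mc_not_both (x : form) : G x -> G (Neg x) -> False.
Proof.
  intros Hx Hnx. apply G_consistent. exists [x; Neg x]. split.
  - intros z [<-|[<-|[]]]; auto.
  - apply ax_taut. truth_table.
Qed.

Lemma mc_thm (x : form) : GLP_prv x -> G x.
Proof.
  intros Hx. destruct (G_complete x) as [|Hnx]; auto. exfalso. apply G_consistent.
  exists [Neg x]. split; [intros y [<-|[]]; exact Hnx|].
  revert Hx. apply prv_tauto1. truth_table.
Qed.

Lemma mc_mp (x y : form) : G x -> G (Imp x y) -> G y.
Proof.
  intros Hx Hxy. destruct (G_complete y) as [|Hny]; auto. exfalso. apply G_consistent.
  exists [x; Imp x y; Neg y]. split.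
  - intros z [<-|[<-|[<-|[]]]]; auto.
  - apply ax_taut. truth_table.
Qed.

Lemma mc_And (x y : form) : G x -> G y -> G (And x y).
Proof.
  intros Hx Hy. apply (mc_mp y); auto. apply (mc_mp x); auto. apply mc_thm, ax_taut. truth_table.
Qed.

Definition box1_holds (b : form) : Prop :=
  exists a l, G (Box 0 a) /\ G l /\ stable 1 l /\ GLP_prv (Imp (And a l) b).

Lemma box1_holds_thm (b : form) : GLP_prv b -> box1_holds b.
Proof.
  intros Hb. exists Top, Top. split; [|split; [|split]].
  - apply mc_thm, r_nec, ax_taut. truth_table.
  - apply mc_thm, ax_taut. truth_table.
  - apply stable_Top.
  - revert Hb. apply prv_tauto1. truth_table.
Qed.

Lemma box1_holds_box0 (b : form) : G (Box 0 b) -> box1_holds b.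
Proof.
  intros Hb. exists b, Top. split; [exact Hb|split; [|split]].
  - apply mc_thm, ax_taut. truth_table.
  - apply stable_Top.
  - apply ax_taut. truth_table.
Qed.

Lemma box1_holds_dia0 (a : form) : ~ G (Box 0 (Neg a)) -> box1_holds (Dia 0 a).
Proof.
  intros Ha. exists Top, (Dia 0 a). split; [|split; [|split]].
  - apply mc_thm, r_nec, ax_taut. truth_table.
  - destruct (G_complete (Box 0 (Neg a))); [contradiction | assumption].
  - apply ax_neg. lia.
  - apply ax_taut. truth_table.
Qed.

Lemma box1_holds_mp (x y : form) : box1_holds (Imp x y) -> box1_holds x -> box1_holds y.
Proof.
  intros (a1 & l1 & Ha1 & Hl1 & Hs1 & H1) (a2 & l2 & Ha2 & Hl2 & Hs2 & H2).
  exists (And a1 a2), (And l1 l2). split; [|split; [|split]].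
  - apply (mc_mp (Box 0 a2)); auto. apply (mc_mp (Box 0 a1)); auto. apply mc_thm, box_and.
  - apply mc_And; assumption.
  - apply stable_And; assumption.
  - revert H1 H2. apply prv_tauto2. truth_table.
Qed.

(* Löb's axiom for [1] turns a /\ l -> ([1]b -> b) into l /\ [0]a -> [1]b,
   and l /\ [0]a is again 1-stable. *)
Lemma box1_holds_lob (b : form) : box1_holds (Imp (Box 1 b) b) -> box1_holds b.
Proof.
  intros (a & l & Ha & Hl & Hs & H).
  exists a, (And l (Box 0 a)). split; [exact Ha|split; [|split]].
  - apply mc_And; assumption.
  - apply stable_And; [exact Hs | apply stable_box; lia].
  - assert (Hal : GLP_prv (Imp (And l (Box 0 a)) (Box 1 (And a l)))).
    { generalize Hs (ax_mono 0 1 a ltac:(lia)) (box_and 1 a l).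
      apply prv_tauto3. truth_table. }
    assert (Hb : GLP_prv (Imp (And l (Box 0 a)) (Box 1 b))).
    { generalize Hal (box_mono 1 _ _ H) (ax_Lob 1 b). apply prv_tauto3. truth_table. }
    revert H Hb. apply prv_tauto2. truth_table.
Qed.

Lemma box1_holds_of_prv (b : form) : GLP_prv (Box 1 b) -> box1_holds b.
Proof.
  exact (holds_sound G box1_holds mc_thm mc_mp box1_holds_thm box1_holds_mp
           box1_holds_lob box1_holds_box0 box1_holds_dia0 (Box 1 b)).
Qed.

Lemma box1_holds_reflect (b : form) :
  (forall a, G (Imp (Box 0 a) a)) -> box1_holds b -> G b.
Proof.
  intros Hrefl (a & l & Ha & Hl & _ & H).
  apply (mc_mp (And a l)); [|apply mc_thm; exact H].
  apply mc_And; [apply (mc_mp (Box 0 a)); auto | exact Hl].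
Qed.

End MaximalConsistent.

Theorem mainTheorem15 : forall phi : form,
  GLP_prv (Box 1 phi) <-> exists k : nat, 1 <= k /\ GLP_prv (Q k phi).
Proof.
  intros phi. split.
  - intros Hbox. apply NNPP. intros HnoQ.
    assert (Hcons : ~ inconsistent (refl_theory phi)).
    { apply refl_theory_consistent. intros n Hn.
      apply HnoQ. exists (S n). split; [lia | exact Hn]. }
    destruct (lindenbaum _ Hcons) as (G & HRG & HGcons & HGcomp).
    assert (Hphi : G phi).
    { apply (box1_holds_reflect G HGcons HGcomp).
      - intros a. apply HRG. right. exists a. reflexivity.
      - apply box1_holds_of_prv; assumption. }
    apply (mc_not_both G HGcons phi Hphi). apply HRG. left. reflexivity.
  - intros [[|k] [Hk HQ]]; [lia|].
    exact (r_mp _ _ (box1_Q_box1 k phi) (r_nec 1 _ HQ)).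
Qed.
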